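(* Fix a valid ILA model and a secret parameter $\mathsf{sp}\in\mathcal{SP}$. Let $\Gamma$ be a typing context, $e$ an expression and $\tau$ a type such that $\mathsf{topub}(\mathsf{sp});\Gamma\vdash e:\tau$. Then $\mathsf{sp};\Gamma\vDash e:\tau$; that is, for every substitution $\gamma$ with $\mathsf{sp};\Gamma\vDash\gamma$, there exists a value $v$ with $\langle\gamma,e\rangle\Downarrow v$ and $v\in[\![\tau]\!]^{\mathsf{sp}}$.
   Context: An ILA model consists of: sets $\mathcal{PP}$ (public parameters) and $\mathcal{SP}$ (secret parameters) with a map $\mathsf{topub}:\mathcal{SP}\to\mathcal{PP}$; for each sort $s\in\{\mathsf{msg},\mathsf{plain},\mathsf{cipher}\}$ a carrier set $[\![s]\!]$ (the sort of a value $v$, written $\mathsf{sort}(v)$, is the $s$ with $v\in[\![s]\!]$) and a partially ordered set $(B_s,\le_s)$ of bounds; maps $|\cdot|^{\mathsf{pp}}_{\mathsf{msg}}:[\![\mathsf{msg}]\!]\to B_{\mathsf{msg}}$, $|\cdot|^{\mathsf{pp}}_{\mathsf{plain}}:[\![\mathsf{plain}]\!]\to B_{\mathsf{plain}}$ for $\mathsf{pp}\in\mathcal{PP}$, and $|\cdot|^{\mathsf{sp}}_{\mathsf{cipher}}:[\![\mathsf{cipher}]\!]\to B_{\mathsf{cipher}}$ for $\mathsf{sp}\in\mathcal{SP}$ (for $s\in\{\mathsf{msg},\mathsf{plain}\}$, $|\cdot|^{\mathsf{sp}}_s$ means $|\cdot|^{\mathsf{topub}(\mathsf{sp})}_s$);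 interpretation maps $\mathsf{interp}^{\mathsf{pp}}_{\mathsf{plain}}:[\![\mathsf{plain}]\!]\to[\![\mathsf{msg}]\!]$, $\mathsf{interp}^{\mathsf{sp}}_{\mathsf{cipher}}:[\![\mathsf{cipher}]\!]\to[\![\mathsf{msg}]\!]$, with $\mathsf{interp}^{\mathsf{pp}}_{\mathsf{msg}}$ the identity and $\mathsf{interp}^{\mathsf{sp}}_s:=\mathsf{interp}^{\mathsf{topub}(\mathsf{sp})}_s$ for $s\in\{\mathsf{msg},\mathsf{plain}\}$; and a set of operations, each $\mathsf{op}$ having an arity $s_1,\dots,s_n\to s$ and equipped with a total function $[\![\mathsf{op}]\!]:\prod_i[\![s_i]\!]\to[\![s]\!]$, a partial function $[\![\mathsf{op}]\!]^{\mathsf{pp}}_{\mathsf{bnd}}:\prod_i B_{s_i}\rightharpoonup B_s$ for each $\mathsf{pp}$, and a function $[\![\mathsf{op}]\!]_{\mathsf{msg}}:[\![\mathsf{msg}]\!]^n\to[\![\mathsf{msg}]\!]$. There is a nullary operation $\mathsf{true}:()\to\mathsf{msg}$. The model is valid if (Commutativity) for all $\mathsf{sp}$, all $\mathsf{op}:\vec s_i\to s$ and all $v_i\in[\![s_i]\!]$, if $[\![\mathsf{op}]\!]^{\mathsf{topub}(\mathsf{sp})}_{\mathsf{bnd}}(|v_1|^{\mathsf{sp}}_{s_1},\dots)=b$ is defined then $|[\![\mathsf{op}]\!](\vec v_i)|^{\mathsf{sp}}_s\le_s b$ and $\mathsf{interp}^{\mathsf{sp}}_s([\![\mathsf{op}]\!](\vec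 v_i))=[\![\mathsf{op}]\!]_{\mathsf{msg}}(\mathsf{interp}^{\mathsf{sp}}_{s_1}(v_1),\dots)$; and (Downwards Closed) if $[\![\mathsf{op}]\!]^{\mathsf{topub}(\mathsf{sp})}_{\mathsf{bnd}}(\vec b_i)=b$ is defined and $b_i'\le_{s_i}b_i$ for all $i$, then $[\![\mathsf{op}]\!]^{\mathsf{topub}(\mathsf{sp})}_{\mathsf{bnd}}(\vec b_i')=b'$ is defined with $b'\le_s b$. Syntax: expressions $e::=x\mid v\mid\mathsf{op}(e_1,\dots,e_n)$ where $x$ is a variable and $v\in[\![s]\!]$ with $s\in\{\mathsf{msg},\mathsf{plain}\}$. A substitution $\gamma$ maps variables to values in $[\![\mathsf{msg}]\!]\cup[\![\mathsf{plain}]\!]\cup[\![\mathsf{cipher}]\!]$. Big-step evaluation $\langle\gamma,e\rangle\Downarrow v$: $\langle\gamma,x\rangle\Downarrow\gamma(x)$; $\langle\gamma,v\rangle\Downarrow v$; if $\mathsf{op}:\vec s_i\to s$ and $\langle\gamma,e_i\rangle\Downarrow v_i\in[\![s_i]\!]$ for all $i$, then $\langle\gamma,\mathsf{op}(\vec e_i)\rangle\Downarrow[\![\mathsf{op}]\!](\vec v_i)$. Types are $s\ \alpha$ with $s$ a sort and $\alpha\in B_s$; $|s\ \alpha|=\alpha$, $\mathsf{sort}(s\ \alpha)=s$; subtyping $s\ \alpha\le s\ \alpha'$ iff $\alpha\le_s\alpha'$. A context $\Gamma$ is a finite map from variables to types. Typing $\mathsf{pp};\Gamma\vdash e:\tau$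 is given by: if $x:\tau\in\Gamma$ then $\mathsf{pp};\Gamma\vdash x:\tau$; if $\mathsf{pp};\Gamma\vdash e:\tau$ and $\tau\le\tau'$ then $\mathsf{pp};\Gamma\vdash e:\tau'$; if $\mathsf{sort}(v)=s$ then $\mathsf{pp};\Gamma\vdash v:s\ |v|^{\mathsf{pp}}_s$; if $\mathsf{op}:\vec s_i\to s$, $\mathsf{pp};\Gamma\vdash e_i:\tau_i$ with $\mathsf{sort}(\tau_i)=s_i$ for all $i$, and $[\![\mathsf{op}]\!]^{\mathsf{pp}}_{\mathsf{bnd}}(|\tau_1|,\dots,|\tau_n|)=\alpha$ is defined, then $\mathsf{pp};\Gamma\vdash\mathsf{op}(\vec e_i):s\ \alpha$. Semantic types: $[\![s\ \alpha]\!]^{\mathsf{sp}}=\{v\in[\![s]\!]\mid |v|^{\mathsf{sp}}_s\le_s\alpha\}$. $\mathsf{sp};\Gamma\vDash\gamma$ means: for every $x$ in the domain of $\Gamma$, $x$ is in the domain of $\gamma$ and $\gamma(x)\in[\![\Gamma(x)]\!]^{\mathsf{sp}}$. *)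

From Stdlib Require Import List Arith.
Import ListNotations.
Set Implicit Arguments.

Inductive sort : Type := Smsg | Splain | Scipher.

Inductive hlist (F : sort -> Type) : list sort -> Type :=
| HNil : hlist F []
| HCons : forall (s : sort) (ss : list sort), F s -> hlist F ss -> hlist F (s :: ss).
Arguments HNil {F}.
Arguments HCons {F s ss} _ _.

Fixpoint hmap {F G : sort -> Type} (f : forall s, F s -> G s)
  {ss : list sort} (h : hlist F ss) : hlist G ss :=
  match h in hlist _ ss return hlist G ss with
  | HNil => HNil
  | HCons x h' => HCons (f _ x) (hmap f h')
  end.

Inductive hall2 (F : sort -> Type) (R : forall s, F s -> F s -> Prop) :
  forall ss, hlist F ss -> hlist F ss -> Prop :=
| hall2_nil : hall2 R HNil HNil
| hall2_cons : forall s ss (x y : F s) (xs ys : hlist F ss),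
    R s x y -> hall2 R xs ys -> hall2 R (HCons x xs) (HCons y ys).

Record ILA : Type := {
  PP : Type;
  SP : Type;
  topub : SP -> PP;
  car : sort -> Type;
  B : sort -> Type;
  le : forall s, B s -> B s -> Prop;
  le_refl : forall s (b : B s), le b b;
  le_trans : forall s (a b c : B s), le a b -> le b c -> le a c;
  le_antisym : forall s (a b : B s), le a b -> le b a -> a = b;
  norm_msg : PP -> car Smsg -> B Smsg;
  norm_plain : PP -> car Splain -> B Splain;
  norm_cipher : SP -> car Scipher -> B Scipher;
  interp_plain : PP -> car Splain -> car Smsg;
  interp_cipher : SP -> car Scipher -> car Smsg;
  Op : Type;
  args : Op -> list sort;
  res : Op -> sort;
  sem : forall op, hlist car (args op) -> car (res op);
  bnd : PP -> forall op, hlist B (args op) -> option (B (res op));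
  msgop : forall op, hlist (fun _ => car Smsg) (args op) -> car Smsg;
  op_true : Op;
  args_true : args op_true = [];
  res_true : res op_true = Smsg
}.

Arguments le {i s} _ _.

Section Model.
Variable M : ILA.

Definition norm_sp (sp : SP M) (s : sort) : car M s -> B M s :=
  match s return car M s -> B M s with
  | Smsg => norm_msg M (topub M sp)
  | Splain => norm_plain M (topub M sp)
  | Scipher => norm_cipher M sp
  end.

Definition interp_sp (sp : SP M) (s : sort) : car M s -> car M Smsg :=
  match s return car M s -> car M Smsg with
  | Smsg => fun v => v
  | Splain => interp_plain M (topub M sp)
  | Scipher => interp_cipher M sp
  end.

Definition valid : Prop :=
  (forall (sp : SP M) (op : Op M) (vs : hlist (car M) (args M op)) (b : B M (res M op)),
      bnd M (topub M sp) op (hmap (norm_sp sp) vs) = Some b ->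
      le (norm_sp sp _ (sem M op vs)) b /\
      interp_sp sp _ (sem M op vs) = msgop M op (hmap (interp_sp sp) vs))
  /\
  (forall (sp : SP M) (op : Op M) (bs bs' : hlist (B M) (args M op)) (b : B M (res M op)),
      bnd M (topub M sp) op bs = Some b ->
      hall2 (fun s (x y : B M s) => le x y) bs' bs ->
      exists b', bnd M (topub M sp) op bs' = Some b' /\ le b' b).

Definition var := nat.

Inductive expr : Type :=
| EVar : var -> expr
| EMsg : car M Smsg -> expr
| EPlain : car M Splain -> expr
| EOp : Op M -> exprs -> expr
with exprs : Type :=
| ENil : exprs
| ECons : expr -> exprs -> exprs.

Definition value := {s : sort & car M s}.
Definition subst := var -> option value.

Inductive eval (g : subst) : expr -> value -> Prop :=
| eval_var : forall x v, g x = Some v -> eval g (EVar x) v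
| eval_msg : forall v, eval g (EMsg v) (existT _ Smsg v)
| eval_plain : forall v, eval g (EPlain v) (existT _ Splain v)
| eval_op : forall op es (vs : hlist (car M) (args M op)),
    evals g es vs -> eval g (EOp op es) (existT _ (res M op) (sem M op vs))
with evals (g : subst) : exprs -> forall ss, hlist (car M) ss -> Prop :=
| evals_nil : evals g ENil HNil
| evals_cons : forall e es s ss (v : car M s) (vs : hlist (car M) ss),
    eval g e (existT _ s v) -> evals g es vs -> evals g (ECons e es) (HCons v vs).

Definition ty := {s : sort & B M s}.

Inductive subty : ty -> ty -> Prop :=
| subty_intro : forall s (a a' : B M s), le a a' -> subty (existT _ s a) (existT _ s a').

(** contexts: finite maps, as association lists (first binding wins) *)
Definition ctx := list (var * ty).

Fixpoint lookup (G : ctx) (x : var) : option ty :=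
  match G with
  | [] => None
  | (y, t) :: G' => if Nat.eqb x y then Some t else lookup G' x
  end.

Inductive has_type (pp : PP M) (G : ctx) : expr -> ty -> Prop :=
| T_var : forall x t, lookup G x = Some t -> has_type pp G (EVar x) t
| T_sub : forall e t t', has_type pp G e t -> subty t t' -> has_type pp G e t'
| T_msg : forall v, has_type pp G (EMsg v) (existT _ Smsg (norm_msg M pp v))
| T_plain : forall v, has_type pp G (EPlain v) (existT _ Splain (norm_plain M pp v))
| T_op : forall op es (bs : hlist (B M) (args M op)) (a : B M (res M op)),
    has_types pp G es bs -> bnd M pp op bs = Some a ->
    has_type pp G (EOp op es) (existT _ (res M op) a)
with has_types (pp : PP M) (G : ctx) : exprs -> forall ss, hlist (B M) ss -> Prop :=
| Ts_nil : has_types pp G ENil HNil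
| Ts_cons : forall e es s ss (b : B M s) (bs : hlist (B M) ss),
    has_type pp G e (existT _ s b) -> has_types pp G es bs ->
    has_types pp G (ECons e es) (HCons b bs).

Definition sem_ty (sp : SP M) (t : ty) (v : car M (projT1 t)) : Prop :=
  le (norm_sp sp _ v) (projT2 t).

Definition sem_ctx (sp : SP M) (G : ctx) (g : subst) : Prop :=
  forall x t, lookup G x = Some t ->
    exists v : car M (projT1 t), g x = Some (existT _ (projT1 t) v) /\ sem_ty sp t v.

End Model.


Scheme has_type_mut := Induction for has_type Sort Prop
with has_types_mut := Induction for has_types Sort Prop.

Section Soundness.

Variables (M : ILA) (sp : SP M) (g : subst M).

Definition sem_typed (e : expr M) (t : ty M) : Prop :=
  exists v : car M (projT1 t), eval g e (existT _ (projT1 t) v) /\ sem_ty sp t v.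

Definition sem_typeds (es : exprs M) {ss : list sort} (bs : hlist (B M) ss) : Prop :=
  exists vs : hlist (car M) ss, evals g es vs /\
    hall2 (fun s (x y : B M s) => le x y) (hmap (norm_sp M sp) vs) bs.

Lemma sem_typed_var (G : ctx M) (x : var) (t : ty M) :
  sem_ctx sp G g -> lookup G x = Some t -> sem_typed (EVar M x) t.
Proof.
  intros Hg Hx. destruct (Hg x t Hx) as [v [Hv Hvt]].
  exists v. split; [constructor; exact Hv | exact Hvt].
Qed.

Lemma sem_typed_sub (e : expr M) (t t' : ty M) :
  sem_typed e t -> subty t t' -> sem_typed e t'.
Proof.
  intros [v [Hv Hvt]] Hsub. destruct Hsub as [s a a' Haa'].
  exists v. split; [exact Hv |].
  eapply le_trans; [exact Hvt | exact Haa'].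
Qed.

Lemma sem_typed_msg (v : car M Smsg) :
  sem_typed (EMsg M v) (existT _ Smsg (norm_msg M (topub M sp) v)).
Proof. exists v. split; [constructor | apply le_refl]. Qed.

Lemma sem_typed_plain (v : car M Splain) :
  sem_typed (EPlain M v) (existT _ Splain (norm_plain M (topub M sp) v)).
Proof. exists v. split; [constructor | apply le_refl]. Qed.

(* The arguments' actual norms lie below [bs], so downward closure yields a
   bound [b' <= a] for them, and commutativity bounds the result's norm by [b']. *)
Lemma sem_typed_op (op : Op M) (es : exprs M) (bs : hlist (B M) (args M op))
  (a : B M (res M op)) :
  valid M -> sem_typeds es bs -> bnd M (topub M sp) op bs = Some a ->
  sem_typed (EOp op es) (existT _ (res M op) a).
Proof.
  intros [Hcomm Hdown] [vs [Hvs Hnorms]] Hbnd.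
  destruct (Hdown sp op bs _ a Hbnd Hnorms) as [b' [Hb' Hb'a]].
  destruct (Hcomm sp op vs b' Hb') as [Hres _].
  exists (sem M op vs). split; [constructor; exact Hvs |].
  eapply le_trans; [exact Hres | exact Hb'a].
Qed.

Lemma sem_typeds_nil : sem_typeds (ENil M) HNil.
Proof. exists HNil. split; constructor. Qed.

Lemma sem_typeds_cons (e : expr M) (es : exprs M) (s : sort) (ss : list sort)
  (b : B M s) (bs : hlist (B M) ss) :
  sem_typed e (existT _ s b) -> sem_typeds es bs ->
  sem_typeds (ECons e es) (HCons b bs).
Proof.
  intros [v [Hv Hvb]] [vs [Hvs Hnorms]].
  exists (HCons v vs). split; constructor; assumption.
Qed.

Lemma has_type_sound {G : ctx M} {e : expr M} {t : ty M} :
  valid M -> sem_ctx sp G g -> has_type (topub M sp) G e t -> sem_typed e t.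
Proof.
  intros HM Hg. revert e t.
  apply (has_type_mut M (topub M sp) G (fun e t _ => sem_typed e t)
           (fun es ss bs _ => sem_typeds es bs)); intros.
  - eapply sem_typed_var; eassumption.
  - eapply sem_typed_sub; eassumption.
  - apply sem_typed_msg.
  - apply sem_typed_plain.
  - eapply sem_typed_op; eassumption.
  - apply sem_typeds_nil.
  - apply sem_typeds_cons; assumption.
Qed.

End Soundness.

Theorem mainTheorem1 (M : ILA) (HM : valid M) (sp : SP M)
  (G : ctx M) (e : expr M) (t : ty M) :
  has_type (topub M sp) G e t ->
  forall g : subst M, sem_ctx sp G g ->
  exists v : car M (projT1 t), eval g e (existT _ (projT1 t) v) /\ sem_ty sp t v.
Proof.
  intros Hty g Hg.
  exact (has_type_sound M sp g HM Hg Hty).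
Qed.
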